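(* Fix $r\in(0,|\xi|_c)$ and let $\alpha(s)=\alpha(r;s)$ for $s>0$. Then: (1) $\alpha\in C^{0,1}_{loc}((0,\infty))\cap C^0((0,\infty))$ and $\alpha$ is strictly increasing in $s$; (2) there exist constants $C_0,C_1,C_2>0$ depending on $\rho_\pm,\mu_\pm,\sigma_\pm,b,g,r$ such that for all $s>0$ $$\alpha(s)\le-C_0+sC_1\quad\text{and}\quad\alpha(s)\ge-\frac{2g(\rho_+-\rho_-)}{\rho_-}r+sC_2.$$
   Context: Fix $b,g>0$, $\rho_+>\rho_->0$, $\mu_\pm>0$, $\sigma_\pm\ge0$ (either both zero or both positive); $[\![\rho]\!]=\rho_+-\rho_-$. Let $\rho(x_3),\mu(x_3)$ equal $\rho_+,\mu_+$ on $(0,1)$ and $\rho_-,\mu_-$ on $(-b,0)$. $X=\{\psi\in H^2((-b,1)):\psi(-b)=\psi'(-b)=0\}$. For $r>0,s>0$: $E(\psi;r,s)=\frac12\int_{-b}^1s\mu(4r^2|\psi'|^2+|r^2\psi+\psi''|^2)dx_3+\frac12r^2(\sigma_+r^2+g\rho_+)|\psi(1)|^2+\frac12r^2(\sigma_-r^2-g[\![\rho]\!])|\psi(0)|^2$, $J(\psi;r)=\frac12\int_{-b}^1\rho(r^2|\psi|^2+|\psi'|^2)dx_3$, $\alpha(r;s)=\inf\{E(\psi;r,s):\psi\in X,\ J(\psi;r)=1\}$. $|\xi|_c=\sqrt{g[\![\rho]\!]/\sigma_-}$ if $\sigma_->0$, $|\xi|_c=\infty$ if $\sigma_-=0$. 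*)

From HB Require Import structures.
From mathcomp Require Import all_boot all_order all_algebra.
From mathcomp Require Import all_classical all_reals all_analysis.
Set Implicit Arguments. Unset Strict Implicit. Unset Printing Implicit Defensive.
Import Order.TTheory GRing.Theory Num.Theory.
Import numFieldNormedType.Exports.
Local Open Scope classical_set_scope.
Local Open Scope ring_scope.

Section Defs.
Variable R : realType.
Local Notation mu := (@lebesgue_measure R).

(* (psi, dpsi, ddpsi) represents an element of H^2((a,c)) : psi is the
   (continuous) representative, dpsi its (continuous) first derivative and
   ddpsi its weak second derivative, which lies in L^2((a,c)).  On a bounded
   interval this is exactly the characterization of H^2 in one dimension:
   psi' absolutely continuous with psi'' in L^2. *)
Definition H2_rep (a c : R) (psi dpsi ddpsi : R -> R) : Prop :=
  [/\ measurable_fun `[a, c] ddpsi,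
      (\int[mu]_(x in `[a, c]) ((ddpsi x) ^+ 2)%:E < +oo)%E,
      (forall x, a <= x <= c ->
         dpsi x = dpsi a + \int[mu]_(t in `[a, x]) ddpsi t) &
      (forall x, a <= x <= c ->
         psi x = psi a + \int[mu]_(t in `[a, x]) dpsi t)].

Definition in_X (b : R) (psi dpsi ddpsi : R -> R) : Prop :=
  [/\ H2_rep (- b) 1 psi dpsi ddpsi, psi (- b) = 0 & dpsi (- b) = 0].

Definition pw (vp vm : R) (x : R) : R := if x < 0 then vm else vp.

Definition Efun (b g rhop rhom mup mum sigp sigm : R)
    (psi dpsi ddpsi : R -> R) (r s : R) : R :=
  2^-1 * (\int[mu]_(x in `[- b, 1])
            (s * pw mup mum x *
             (4 * r ^+ 2 * (dpsi x) ^+ 2 + (r ^+ 2 * psi x + ddpsi x) ^+ 2)))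
  + 2^-1 * r ^+ 2 * (sigp * r ^+ 2 + g * rhop) * (psi 1) ^+ 2
  + 2^-1 * r ^+ 2 * (sigm * r ^+ 2 - g * (rhop - rhom)) * (psi 0) ^+ 2.

Definition Jfun (b rhop rhom : R) (psi dpsi : R -> R) (r : R) : R :=
  2^-1 * (\int[mu]_(x in `[- b, 1])
            (pw rhop rhom x * (r ^+ 2 * (psi x) ^+ 2 + (dpsi x) ^+ 2))).

Definition alpha (b g rhop rhom mup mum sigp sigm r s : R) : \bar R :=
  ereal_inf [set e : \bar R | exists psi dpsi ddpsi,
      [/\ in_X b psi dpsi ddpsi, Jfun b rhop rhom psi dpsi r = 1 &
           e = (Efun b g rhop rhom mup mum sigp sigm psi dpsi ddpsi r s)%:E]].

(* r < |xi|_c, where |xi|_c = sqrt(g [[rho]] / sigma_-) if sigma_- > 0 and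
   |xi|_c = +infinity if sigma_- = 0 *)
Definition below_crit (g rhop rhom sigm r : R) : bool :=
  (sigm == 0) || (r < Num.sqrt (g * (rhop - rhom) / sigm)).

End Defs.

(* Write E(psi; r, s) = s * Evis + Epot, so that alpha(s) is the infimum, over the
   admissible set {psi in X : J(psi) = 1}, of the affine functions s |-> s Evis + Epot.
   Since psi(-b) = 0, integrating the derivatives of psi^2 and of (x - 2) psi^2 gives
   the trace bound rho_- r psi(0)^2 <= 2 J and the Poincare inequality
   \int psi^2 <= 4 (b + 2)^2 \int psi'^2.  Hence every slope Evis is at least a constant
   C2 > 0 and every intercept Epot is at least - r g [[rho]] / rho_-, and an infimum of
   such a family of affine functions is finite, strictly increasing, locally Lipschitz
   and bounded below by - r g [[rho]] / rho_- + s C2.  The upper bound comes from the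
   normalised test function (x + b)^2 (1 - x), whose Epot is negative exactly because
   r < |xi|_c. *)

From HB Require Import structures.
From mathcomp Require Import all_boot all_order all_algebra.
From mathcomp Require Import all_classical all_reals all_analysis.
From mathcomp Require Import ring lra measurable_realfun.
Import Order.TTheory GRing.Theory Num.Theory.
Import numFieldNormedType.Exports.
Local Open Scope classical_set_scope.
Local Open Scope ring_scope.

Section segment_calculus.
Variable R : realType.
Local Notation mu := (@lebesgue_measure R).
Implicit Types (a c : R) (F f : R -> R).

Lemma within_continuousD {A : set R} {f g : R -> R} :
  {within A, continuous f} -> {within A, continuous g} ->
  {within A, continuous (fun x => f x + g x)}.
Proof. by move=> cf cg x; exact: continuousD (cf x) (cg x). Qed.

Lemma within_continuousB {A : set R} {f g : R -> R} :
  {within A, continuous f} -> {within A, continuous g} ->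
  {within A, continuous (fun x => f x - g x)}.
Proof. by move=> cf cg x; exact: continuousB (cf x) (cg x). Qed.

Lemma within_continuousM {A : set R} {f g : R -> R} :
  {within A, continuous f} -> {within A, continuous g} ->
  {within A, continuous (fun x => f x * g x)}.
Proof. by move=> cf cg x; exact: continuousM (cf x) (cg x). Qed.

Lemma within_continuousX {A : set R} {f : R -> R} n :
  {within A, continuous f} -> {within A, continuous (fun x => f x ^+ n)}.
Proof. by move=> cf x; exact: continuous_comp (cf x) (@exprn_continuous R n _). Qed.

Lemma within_continuousZ {A : set R} k {f : R -> R} :
  {within A, continuous f} -> {within A, continuous (fun x => k * f x)}.
Proof. by apply: within_continuousM => x; exact: cst_continuous. Qed.

Lemma within_continuous_integrable {a c : R} {f : R -> R} :
  {within `[a, c], continuous f} -> mu.-integrable `[a, c] (EFin \o f).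
Proof. by apply: continuous_compact_integrable; exact: segment_compact. Qed.

Lemma le_Rintegral_subset {A B : set R} {f : R -> R} : measurable A -> measurable B ->
  A `<=` B -> mu.-integrable B (EFin \o f) -> (forall x, B x -> 0 <= f x) ->
  \int[mu]_(x in A) f x <= \int[mu]_(x in B) f x.
Proof.
move=> mA mB AB fi f0; apply: fine_le.
- by apply: integrable_fin_num => //; exact: integrableS fi.
- exact: integrable_fin_num.
- by apply: ge0_subset_integral => //; case/integrableP: fi.
Qed.

Lemma Rintegral_is_derive {a c : R} {G g : R -> R} : a < c ->
  {within `[a, c], continuous G} -> {within `[a, c], continuous g} ->
  (forall x, a < x < c -> is_derive x 1 G (g x)) ->
  \int[mu]_(x in `[a, c]) g x = G c - G a.
Proof.
move=> ac cG cg dG; have [_ Ga Gc] := (continuous_within_itvP _ ac).1 cG.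
have G'g : {in `]a, c[, derive1 G =1 g}.
  by move=> x; rewrite in_itv /= => /dG Gx; rewrite derive1E derive_val.
have LR : derivable_oo_LRcontinuous G a c.
  by split=> // x; rewrite in_itv /= => /dG [].
by rewrite /Rintegral (continuous_FTC2 ac cg LR G'g) -EFinB.
Qed.

Lemma within_continuous_primitive a c F f : a <= c ->
  mu.-integrable `[a, c] (EFin \o f) ->
  (forall x, a <= x <= c -> F x = F a + \int[mu]_(t in `[a, x]) f t) ->
  {within `[a, c], continuous F}.
Proof.
move=> ac fi FE.
apply: (subspace_eq_continuous (f := fun x => F a + \int[mu]_(t in `[a, x]) f t)).
  by move=> x; rewrite inE /= in_itv /= => /FE <-.
apply: (@within_continuousD _ (fun=> F a)) => [y|]; first exact: cst_continuous.
exact: parameterized_integral_continuous.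
Qed.

Lemma is_derive_primitive a c F f x : a < x < c ->
  mu.-integrable `[a, c] (EFin \o f) -> {for x, continuous f} ->
  (forall y, a <= y <= c -> F y = F a + \int[mu]_(t in `[a, y]) f t) ->
  is_derive x 1 F (f x).
Proof.
case/andP=> ax xc fi fx FE.
have [dI I'x] := continuous_FTC1_closed xc fi ax fx.
apply: (@near_eq_is_derive _ _ _ (fun y => F a + \int[mu]_(t in `[a, y]) f t)).
  have xI : x \in `]a, c[ by rewrite in_itv /= ax.
  near=> y; have : y \in `]a, c[ by near: y; exact: near_in_itvoo.
  by rewrite in_itv /= => /andP[ay yc]; rewrite [F y]FE // (ltW ay) (ltW yc).
rewrite -[f x]add0r; apply: is_deriveD.
by apply: DeriveDef dI _; rewrite -derive1E.
Unshelve. all: by end_near.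
Qed.

Lemma is_derive_continuous {F f : R -> R} :
  (forall x : R, is_derive x 1 F (f x)) -> continuous F.
Proof.
by move=> dF x; apply/differentiable_continuous/derivable1_diffP; case: (dF x).
Qed.

Lemma primitive_is_derive a x F f : a <= x -> continuous f ->
  (forall y : R, is_derive y 1 F (f y)) ->
  F x = F a + \int[mu]_(t in `[a, x]) f t.
Proof.
rewrite le_eqVlt => /predU1P[<- _ _|ax cf dF].
  by rewrite set_itv1 Rintegral_set1 addr0.
have cF : {within `[a, x], continuous F} := continuous_subspaceT (is_derive_continuous dF).
by rewrite (Rintegral_is_derive ax cF (continuous_subspaceT cf)) // addrC subrK.
Qed.

Section vanishing_at_left_end.
Variables (a c : R) (F f : R -> R).
Hypotheses (ac : a < c) (F_cont : {within `[a, c], continuous F})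
  (f_cont : {within `[a, c], continuous f})
  (F_der : forall x, a < x < c -> is_derive x 1 F (f x)) (Fa : F a = 0).

Lemma trace_le r x : a < x <= c ->
  r * F x ^+ 2 <= \int[mu]_(t in `[a, c]) (r ^+ 2 * F t ^+ 2 + f t ^+ 2).
Proof.
case/andP=> ax xc; have sub : `[a, x] `<=` `[a, c] by apply: subset_itvl; rewrite bnd_simp.
have cFx := continuous_subspaceW sub F_cont.
have cfx := continuous_subspaceW sub f_cont.
have cJ : {within `[a, c], continuous (fun t => r ^+ 2 * F t ^+ 2 + f t ^+ 2)}.
  by apply: within_continuousD; [apply: within_continuousZ|]; exact: within_continuousX.
have dG t : a < t < x -> is_derive t 1 (fun t => r * F t ^+ 2) (2 * r * (F t * f t)).
  case/andP=> a_t t_x.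
  have Ft : is_derive t 1 F (f t) by apply: F_der; rewrite a_t (lt_le_trans t_x xc).
  by apply: is_derive_eq; rewrite /GRing.scale /=; ring.
have := Rintegral_is_derive ax (within_continuousZ r (within_continuousX 2 cFx))
  (within_continuousZ _ (within_continuousM cFx cfx)) dG.
rewrite Fa expr0n mulr0 subr0 => <-.
apply: le_trans _ (le_Rintegral_subset (measurable_itv _) (measurable_itv _) sub
  (within_continuous_integrable cJ) _); last first.
  by move=> t _; apply: addr_ge0; [apply: mulr_ge0|]; exact: sqr_ge0.
apply: le_Rintegral => //.
- exact/within_continuous_integrable/within_continuousZ/within_continuousM.
- exact: within_continuous_integrable (continuous_subspaceW sub cJ).
- by move=> t _; have := sqr_ge0 (r * F t - f t); nra.
Qed.

Lemma poincare_le :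
  \int[mu]_(t in `[a, c]) (F t ^+ 2) <=
  4 * (c - a + 1) ^+ 2 * \int[mu]_(t in `[a, c]) (f t ^+ 2).
Proof.
(* (t - c - 1) F^2 has derivative F^2 + 2 (t - c - 1) F f and the values 0 at a and
   - F c ^ 2 at c; the weight satisfies |t - c - 1| <= c - a + 1 on [a, c]. *)
have cF2 := within_continuousX 2 F_cont; have cf2 := within_continuousX 2 f_cont.
have cw : {within `[a, c], continuous (fun t => t - c - 1)}.
  apply: continuous_subspaceT => t.
  by apply: cvgB; [apply: cvgB|]; [exact: cvg_id|exact: cvg_cst..].
have dG t : a < t < c -> is_derive t 1 (fun t => (t - c - 1) * F t ^+ 2)
    (F t ^+ 2 + 2 * (t - c - 1) * (F t * f t)).
  move=> act; have Ft := F_der _ act.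
  by apply: is_derive_eq; rewrite /GRing.scale /=; ring.
have cg := within_continuousD cF2 (within_continuousM (within_continuousZ 2 cw)
  (within_continuousM F_cont f_cont)).
have := Rintegral_is_derive ac (within_continuousM cw cF2) cg dG.
rewrite Fa expr0n mulr0 subrr sub0r mulN1r subr0 => key.
have low : \int[mu]_(t in `[a, c]) (2^-1 * F t ^+ 2 - 2 * (c - a + 1) ^+ 2 * f t ^+ 2) <=
    \int[mu]_(t in `[a, c]) (F t ^+ 2 + 2 * (t - c - 1) * (F t * f t)).
  apply: le_Rintegral => //.
  - exact/within_continuous_integrable/(within_continuousB (within_continuousZ _ cF2)
      (within_continuousZ _ cf2)).
  - exact: within_continuous_integrable cg.
  - move=> t; rewrite /= in_itv /= => /andP[a_t t_c].
    have hw : 0 <= ((c - a + 1) ^+ 2 - (t - c - 1) ^+ 2) * f t ^+ 2.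
      apply: mulr_ge0; last exact: sqr_ge0.
      have -> : (c - a + 1) ^+ 2 - (t - c - 1) ^+ 2 = (t - a) * (2 * c - a + 2 - t) by ring.
      by apply: mulr_ge0; lra.
    have := sqr_ge0 (F t + 2 * (t - c - 1) * f t); nra.
have iF2 := within_continuous_integrable cF2.
have if2 := within_continuous_integrable cf2.
rewrite RintegralB ?RintegralZl // in low; last 2 first.
- exact/within_continuous_integrable/(within_continuousZ _ cF2).
- exact/within_continuous_integrable/(within_continuousZ _ cf2).
move: low (sqr_ge0 (F c)); rewrite key; lra.
Qed.

End vanishing_at_left_end.

Section H2_representative.
Variables (a c : R) (psi dpsi ddpsi : R -> R).
Hypotheses (ac : a < c) (psiH2 : H2_rep a c psi dpsi ddpsi).

Lemma H2_rep_sqr_integrable :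
  mu.-integrable `[a, c] (EFin \o (fun x => ddpsi x ^+ 2)).
Proof.
case: psiH2 => mdd fin _ _; apply/integrableP; split.
  by apply/measurable_EFinP; exact: measurable_funX.
apply: le_lt_trans fin; rewrite le_eqVlt; apply/orP; left; apply/eqP.
by apply: eq_integral => x _ /=; rewrite ger0_norm // sqr_ge0.
Qed.

(* L^2 is contained in L^1 on a bounded interval, since |y| <= 1 + y^2. *)
Lemma H2_rep_integrable : mu.-integrable `[a, c] (EFin \o ddpsi).
Proof.
case: psiH2 => mdd _ _ _.
have i1 : mu.-integrable `[a, c] (EFin \o (fun x => 1 + ddpsi x ^+ 2)).
  have i0 : mu.-integrable `[a, c] (EFin \o (fun=> 1)).
    by apply: within_continuous_integrable => x; exact: cst_continuous.
  exact: (eq_integrable _ _ _ _ (integrableD _ i0 H2_rep_sqr_integrable)).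
apply: le_integrable i1 => //; first exact/measurable_EFinP.
move=> x _ /=; rewrite lee_fin [X in _ <= X]ger0_norm; last first.
  by apply: addr_ge0; [exact: ler01|exact: sqr_ge0].
have e : `|ddpsi x| ^+ 2 = ddpsi x ^+ 2 by rewrite real_normK ?num_real.
have := sqr_ge0 (`|ddpsi x| - 1); nra.
Qed.

Lemma H2_rep_dpsi_continuous : {within `[a, c], continuous dpsi}.
Proof.
case: psiH2 => _ _ dpsiE _.
exact: within_continuous_primitive (ltW ac) H2_rep_integrable dpsiE.
Qed.

Lemma H2_rep_psi_continuous : {within `[a, c], continuous psi}.
Proof.
case: psiH2 => _ _ _ psiE.
exact: within_continuous_primitive (ltW ac)
  (within_continuous_integrable H2_rep_dpsi_continuous) psiE.
Qed.

Lemma H2_rep_is_derive x : a < x < c -> is_derive x 1 psi (dpsi x).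
Proof.
move=> axc; case: psiH2 => _ _ _ psiE.
have dpsi_x : {for x, continuous dpsi}.
  have [+ _ _] := (continuous_within_itvP _ ac).1 H2_rep_dpsi_continuous.
  by apply; rewrite in_itv.
exact: is_derive_primitive axc
  (within_continuous_integrable H2_rep_dpsi_continuous) dpsi_x psiE.
Qed.

End H2_representative.

Lemma integrable_weight {D : set R} {w h : R -> R} (M : R) : measurable D ->
  measurable_fun D w -> (forall x, D x -> `|w x| <= M) ->
  mu.-integrable D (EFin \o h) -> mu.-integrable D (EFin \o (fun x => w x * h x)).
Proof.
move=> mD mw wM hi; have /measurable_EFinP mh := measurable_int _ hi.
have Mhi : mu.-integrable D (EFin \o (fun x => M * h x)).
  exact: (eq_integrable _ _ _ _ (integrableZl _ M hi)).
apply: le_integrable Mhi => //.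
  by apply/measurable_EFinP; exact: measurable_funM.
move=> x Dx /=; rewrite lee_fin normrM [`|M * _|]normrM.
apply: ler_wpM2r => //; apply: le_trans (wM x Dx) _; exact: ler_norm.
Qed.

Lemma Rintegral_weight_bounds (D : set R) (w h : R -> R) (m M : R) :
  measurable D -> measurable_fun D w -> mu.-integrable D (EFin \o h) ->
  (forall x, D x -> 0 <= h x) -> (forall x, D x -> m <= w x <= M) ->
  m * \int[mu]_(x in D) h x <= \int[mu]_(x in D) (w x * h x) <= M * \int[mu]_(x in D) h x.
Proof.
move=> mD mw hi h0 wmM.
have whi : mu.-integrable D (EFin \o (fun x => w x * h x)).
  apply: (integrable_weight (`|m| + `|M|)) => // x Dx.
  have /andP[mw' wM] := wmM x Dx; rewrite ler_norml; apply/andP; split.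
    by have := ler_norm (- m); rewrite normrN; have := normr_ge0 M; lra.
  by have := ler_norm M; have := normr_ge0 m; lra.
have Zhi k : mu.-integrable D (EFin \o (fun x => k * h x)).
  exact: (eq_integrable _ _ _ _ (integrableZl _ k hi)).
rewrite -!RintegralZl //; apply/andP; split; apply: le_Rintegral => //.
- by move=> x Dx; have /andP[+ _] := wmM x Dx; exact/ler_wpM2r/h0.
- by move=> x Dx; have /andP[_ +] := wmM x Dx; exact/ler_wpM2r/h0.
Qed.

End segment_calculus.

Arguments within_continuousD {R A f g}.
Arguments within_continuousM {R A f g}.
Arguments within_continuousX {R A f}.
Arguments within_continuousZ {R A} k {f}.
Arguments within_continuous_integrable {R a c f}.
Arguments is_derive_continuous {R F f}.
Arguments Rintegral_weight_bounds {R D w h m M}.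
Arguments trace_le {R a c F f}.
Arguments poincare_le {R a c F f}.
Arguments H2_rep_psi_continuous {R a c psi dpsi ddpsi}.
Arguments H2_rep_dpsi_continuous {R a c psi dpsi ddpsi}.
Arguments H2_rep_is_derive {R a c psi dpsi ddpsi}.
Arguments H2_rep_sqr_integrable {R a c psi dpsi ddpsi}.

Lemma lipschitz_near_continuous (R : realType) (f : R -> R) (s d L : R) : 0 < d ->
  (forall t, `|s - t| < d -> `|f s - f t| <= L * `|s - t|) -> {for s, continuous f}.
Proof.
move=> d_gt0 fL; apply/cvgrPdist_le => e e_gt0.
have L1_gt0 : 0 < `|L| + 1 by rewrite ltr_pwDr.
exists (Num.min d (e / (`|L| + 1))) => /=; first by rewrite lt_min d_gt0 divr_gt0.
move=> t; rewrite /ball_ /= lt_min => /andP[std ste].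
apply: le_trans (fL t std) _; apply: le_trans (ler_wpM2r (normr_ge0 _) (ler_norm L)) _.
rewrite -(divfK (lt0r_neq0 L1_gt0) e) mulrC; apply: ler_pM => //.
- exact: ltW.
- by rewrite lerDl.
Qed.

Section infimum_of_affine_family.
Variables (R : realType) (I : Type) (P : I -> Prop) (A B : I -> R).

Definition affine_inf (s : R) : \bar R := ereal_inf [set (s * A i + B i)%:E | i in P].

Variables (C K : R) (i0 : I).
Hypotheses (C_gt0 : 0 < C) (P_i0 : P i0)
  (A_ge : forall i, P i -> C <= A i) (B_ge : forall i, P i -> - K <= B i).

Lemma affine_inf_ge {s} : 0 < s -> ((- K + s * C)%:E <= affine_inf s)%E.
Proof.
move=> s_gt0; apply: le_ereal_inf_tmp => _ [i Pi <-]; rewrite lee_fin.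
by rewrite addrC; apply: lerD; [exact/ler_wpM2l/A_ge/Pi/ltW|exact: B_ge].
Qed.

Lemma affine_inf_le s i : P i -> (affine_inf s <= (s * A i + B i)%:E)%E.
Proof. by move=> Pi; apply: ereal_inf_lbound; exists i. Qed.

Definition affine_infr s := fine (affine_inf s).

Lemma affine_infE s : 0 < s -> affine_inf s = (affine_infr s)%:E.
Proof.
move=> s_gt0; rewrite /affine_infr fineK // fin_numElt; apply/andP; split.
- exact: lt_le_trans (ltNyr _) (affine_inf_ge s_gt0).
- exact: le_lt_trans (affine_inf_le s i0 P_i0) (ltry _).
Qed.

Lemma affine_infr_ge {s} : 0 < s -> - K + s * C <= affine_infr s.
Proof. by move=> s_gt0; rewrite -lee_fin -affine_infE //; exact: affine_inf_ge. Qed.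

Lemma affine_infr_le {s i} : 0 < s -> P i -> affine_infr s <= s * A i + B i.
Proof. by move=> s_gt0 Pi; rewrite -lee_fin -affine_infE //; exact: affine_inf_le. Qed.

Lemma affine_infr_approx {s e} : 0 < s -> 0 < e ->
  exists2 i, P i & s * A i + B i < affine_infr s + e.
Proof.
move=> s_gt0 e_gt0; have : (affine_inf s < (affine_infr s + e)%:E)%E.
  by rewrite affine_infE // lte_fin ltrDl.
by case/ereal_inf_lt => _ [i Pi <-]; rewrite lte_fin; exists i.
Qed.

Lemma affine_infr_incr {s t} : 0 < s -> s <= t ->
  affine_infr s + (t - s) * C <= affine_infr t.
Proof.
move=> s_gt0 st; have t_gt0 := lt_le_trans s_gt0 st.
rewrite -lee_fin -affine_infE //; apply: le_ereal_inf_tmp => _ [i Pi <-].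
rewrite lee_fin (_ : t * A i + B i = s * A i + B i + (t - s) * A i); last by ring.
apply: lerD; first exact: affine_infr_le.
by apply: ler_wpM2l; [rewrite subr_ge0|exact: A_ge].
Qed.

(* Compare with an e-minimiser i at x, whose slope A i is bounded via i0 and B i >= - K. *)
Lemma affine_infr_sub_le {c d x y} : 0 < c -> c <= x -> x <= y -> y <= d ->
  affine_infr y - affine_infr x <= (d * `|A i0| + `|B i0| + K + 1) / c * (y - x).
Proof.
move=> c_gt0 cx xy yd; have x_gt0 := lt_le_trans c_gt0 cx.
have y_gt0 := lt_le_trans x_gt0 xy.
rewrite lerBlDl; apply/ler_addgt0Pr => e e_gt0.
have m_gt0 : 0 < Num.min e 1 by rewrite lt_min e_gt0 ltr01.
have m_le : Num.min e 1 <= e /\ Num.min e 1 <= 1 by rewrite !ge_min !lexx orbT.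
have [i Pi Ai] := affine_infr_approx x_gt0 m_gt0.
have xA0 : x * A i0 <= d * `|A i0|.
  apply: le_trans (ler_norm _) _; rewrite normrM ger0_norm ?(ltW x_gt0) //.
  exact/ler_wpM2r/(le_trans xy yd).
have xAi : x * A i <= d * `|A i0| + `|B i0| + K + 1.
  have := affine_infr_le x_gt0 P_i0; have := B_ge _ Pi; have := ler_norm (B i0); lra.
have Ai_le : A i <= (d * `|A i0| + `|B i0| + K + 1) / c.
  rewrite ler_pdivlMr // mulrC; apply: le_trans xAi.
  exact/ler_wpM2r/cx/(le_trans (ltW C_gt0) (A_ge _ Pi)).
have := affine_infr_le y_gt0 Pi.
have : (y - x) * A i <= (d * `|A i0| + `|B i0| + K + 1) / c * (y - x).
  by rewrite mulrC ler_wpM2r // subr_ge0.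
lra.
Qed.

Lemma affine_infr_lipschitz c d : 0 < c -> exists L : R,
  forall x y, c <= x <= d -> c <= y <= d ->
    `|affine_infr x - affine_infr y| <= L * `|x - y|.
Proof.
move=> c_gt0; exists ((d * `|A i0| + `|B i0| + K + 1) / c) => x y.
wlog xy : x y / x <= y => [hwlog xI yI|/andP[cx _] /andP[_ yd]].
  have [le_xy|/ltW le_yx] := leP x y; first exact: hwlog.
  by rewrite distrC [`|x - y|]distrC; apply: hwlog.
have := affine_infr_incr (lt_le_trans c_gt0 cx) xy.
have : 0 <= (y - x) * C by rewrite mulr_ge0 ?subr_ge0 // ltW.
move=> yxC incr; have le_a : affine_infr x <= affine_infr y by lra.
rewrite (distrC x y) (distrC (affine_infr x)) (@ger0_norm _ (y - x)) ?subr_ge0 //.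
rewrite (@ger0_norm _ (affine_infr y - _)) ?subr_ge0 //.
exact: affine_infr_sub_le c_gt0 cx xy yd.
Qed.

Lemma affine_infr_lt s t : 0 < s -> s < t -> affine_infr s < affine_infr t.
Proof.
move=> s_gt0 st; apply: lt_le_trans (affine_infr_incr s_gt0 (ltW st)).
by rewrite ltrDl mulr_gt0 // subr_gt0.
Qed.

Lemma affine_infr_continuous s : 0 < s -> {for s, continuous affine_infr}.
Proof.
move=> s_gt0; have s2_gt0 : 0 < s / 2 by rewrite divr_gt0.
have [L sL] := affine_infr_lipschitz _ (2 * s) s2_gt0.
apply: (@lipschitz_near_continuous _ _ _ _ L s2_gt0) => t st.
have := st; rewrite ltr_norml => /andP[st1 st2].
by apply: sL; apply/andP; split; lra.
Qed.

End infimum_of_affine_family.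

Arguments affine_inf {R I}.
Arguments affine_infr {R I}.
Arguments affine_infE {R I P A B C K i0}.
Arguments affine_infr_ge {R I P A B C K i0} _ _ _ {s}.
Arguments affine_infr_le {R I P A B C K i0} _ _ _ {s i}.
Arguments affine_infr_incr {R I P A B C K i0} _ _ _ {s t}.
Arguments affine_infr_lipschitz {R I P A B C K i0}.
Arguments affine_infr_lt {R I P A B C K i0}.
Arguments affine_infr_continuous {R I P A B C K i0}.

Section energies.
Variable R : realType.
Local Notation mu := (@lebesgue_measure R).

Definition Evis (b mup mum : R) (psi dpsi ddpsi : R -> R) (r : R) : R :=
  2^-1 * \int[mu]_(x in `[- b, 1])
    (pw mup mum x * (4 * r ^+ 2 * dpsi x ^+ 2 + (r ^+ 2 * psi x + ddpsi x) ^+ 2)).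

Definition Epot (g rhop rhom sigp sigm : R) (psi : R -> R) (r : R) : R :=
  2^-1 * r ^+ 2 * (sigp * r ^+ 2 + g * rhop) * psi 1 ^+ 2
  + 2^-1 * r ^+ 2 * (sigm * r ^+ 2 - g * (rhop - rhom)) * psi 0 ^+ 2.

Definition coercivity_const (b rhop mup mum r : R) : R :=
  4 * r ^+ 2 * Num.min mup mum / (rhop * (4 * r ^+ 2 * (b + 2) ^+ 2 + 1)).

Lemma coercivity_const_gt0 (b rhop mup mum r : R) :
  0 < rhop -> 0 < mup -> 0 < mum -> 0 < r -> 0 < coercivity_const b rhop mup mum r.
Proof.
move=> rhop_gt0 mup_gt0 mum_gt0 r_gt0.
have K_gt0 : 0 < 4 * r ^+ 2 * (b + 2) ^+ 2 + 1 by have := sqr_ge0 (r * (b + 2)); nra.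
rewrite divr_gt0 ?mulr_gt0 ?exprn_gt0 //.
by rewrite lt_min mup_gt0 mum_gt0.
Qed.

Lemma measurable_pw (D : set R) (vp vm : R) : measurable D -> measurable_fun D (pw vp vm).
Proof.
move=> mD; apply: (measurable_funS (E := setT)) => //.
by apply: measurable_fun_ifT => //; exact: measurable_fun_ltr.
Qed.

Lemma pw_itv (vp vm x : R) : Num.min vp vm <= pw vp vm x <= Num.max vp vm.
Proof. by rewrite /pw; case: ifP => _; rewrite ge_min le_max !lexx ?orbT. Qed.

Lemma normr_pw_le (vp vm x : R) : `|pw vp vm x| <= `|vp| + `|vm|.
Proof. by rewrite /pw; case: ifP => _; rewrite ?lerDl ?lerDr. Qed.

Section admissible.
Variables (b : R) (psi dpsi ddpsi : R -> R).
Hypotheses (b_gt0 : 0 < b) (psiX : in_X b psi dpsi ddpsi).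

Let mb1 : - b < 1.
Proof. by rewrite (@lt_le_trans _ _ 0) ?oppr_lt0 ?ler01. Qed.

Let psiH2 : H2_rep (- b) 1 psi dpsi ddpsi.
Proof. by case: psiX. Qed.

Let psi_mb : psi (- b) = 0.
Proof. by case: psiX. Qed.

Let psi_cont := H2_rep_psi_continuous mb1 psiH2.
Let dpsi_cont := H2_rep_dpsi_continuous mb1 psiH2.
Let mI : measurable [set` `[- b, (1 : R)]] := measurable_itv _.

Let hJ_integrable r :
  mu.-integrable `[- b, 1] (EFin \o (fun x => r ^+ 2 * psi x ^+ 2 + dpsi x ^+ 2)).
Proof.
apply: within_continuous_integrable.
by apply: within_continuousD; [apply: within_continuousZ|]; exact: within_continuousX.
Qed.

Let hE_integrable r : mu.-integrable `[- b, 1]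
  (EFin \o (fun x => 4 * r ^+ 2 * dpsi x ^+ 2 + (r ^+ 2 * psi x + ddpsi x) ^+ 2)).
Proof.
have [mdd _ _ _] := psiH2.
have mpsi := subspace_continuous_measurable_fun mI psi_cont.
have mdpsi := subspace_continuous_measurable_fun mI dpsi_cont.
have dom : mu.-integrable `[- b, 1] (EFin \o (fun x =>
    4 * r ^+ 2 * dpsi x ^+ 2 + (2 * (r ^+ 2 * psi x) ^+ 2 + 2 * ddpsi x ^+ 2))).
  have i1 := within_continuous_integrable
    (within_continuousZ (4 * r ^+ 2) (within_continuousX 2 dpsi_cont)).
  have i2 := within_continuous_integrable
    (within_continuousZ 2 (within_continuousX 2 (within_continuousZ (r ^+ 2) psi_cont))).
  have i3 : mu.-integrable `[- b, 1] (EFin \o (fun x => 2 * ddpsi x ^+ 2)).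
    exact: (eq_integrable _ _ _ _ (integrableZl _ 2 (H2_rep_sqr_integrable psiH2))).
  exact: (eq_integrable _ _ _ _ (integrableD _ i1 (integrableD _ i2 i3))).
apply: le_integrable dom => //.
  apply/measurable_EFinP; apply: measurable_funD.
    by apply: measurable_funM; [exact: measurable_cst|exact: measurable_funX].
  apply: measurable_funX; apply: measurable_funD => //.
  by apply: measurable_funM => //; exact: measurable_cst.
move=> x _ /=; rewrite lee_fin.
have h1 : 0 <= 4 * r ^+ 2 * dpsi x ^+ 2 by have := sqr_ge0 (r * dpsi x); nra.
have h2 := sqr_ge0 (r ^+ 2 * psi x + ddpsi x).
have h3 := sqr_ge0 (r ^+ 2 * psi x - ddpsi x).
by rewrite !ger0_norm; nra.
Qed.

Let hE_ge0 r x : 0 <= 4 * r ^+ 2 * dpsi x ^+ 2 + (r ^+ 2 * psi x + ddpsi x) ^+ 2.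
Proof. by have := sqr_ge0 (r * dpsi x); have := sqr_ge0 (r ^+ 2 * psi x + ddpsi x); nra. Qed.

Let pw_integrable vp vm h : mu.-integrable `[- b, 1] (EFin \o h) ->
  mu.-integrable `[- b, 1] (EFin \o (fun x => pw vp vm x * h x)).
Proof.
exact: integrable_weight (`|vp| + `|vm|) mI (measurable_pw _ _ _ mI)
  (fun x _ => normr_pw_le vp vm x).
Qed.

Lemma Efun_affine g rhop rhom mup mum sigp sigm r s :
  Efun b g rhop rhom mup mum sigp sigm psi dpsi ddpsi r s =
  s * Evis b mup mum psi dpsi ddpsi r + Epot g rhop rhom sigp sigm psi r.
Proof.
rewrite /Efun /Evis /Epot; under eq_Rintegral do rewrite -mulrA.
by rewrite RintegralZl //; [ring|exact/pw_integrable/hE_integrable].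
Qed.

Lemma Jfun_scale rhop rhom r k :
  Jfun b rhop rhom (fun x => k * psi x) (fun x => k * dpsi x) r =
  k ^+ 2 * Jfun b rhop rhom psi dpsi r.
Proof.
rewrite /Jfun mulrCA; congr (_ * _).
rewrite -RintegralZl //; last exact/pw_integrable/hJ_integrable.
by apply: eq_Rintegral => x _; ring.
Qed.

Lemma Jfun_bounds rhop rhom r : 0 < rhom <= rhop ->
  rhom * \int[mu]_(x in `[- b, 1]) (r ^+ 2 * psi x ^+ 2 + dpsi x ^+ 2)
  <= 2 * Jfun b rhop rhom psi dpsi r <=
  rhop * \int[mu]_(x in `[- b, 1]) (r ^+ 2 * psi x ^+ 2 + dpsi x ^+ 2).
Proof.
case/andP=> _ rho_le; rewrite /Jfun mulrA divff ?pnatr_eq0 // mul1r.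
apply: Rintegral_weight_bounds mI (measurable_pw _ _ _ mI) (hJ_integrable r) _ _.
- by move=> x _; apply: addr_ge0; [apply: mulr_ge0|]; exact: sqr_ge0.
- by move=> x _; rewrite /pw; case: ifP => _; rewrite lexx rho_le.
Qed.

Lemma trace_Jfun rhop rhom r : 0 < rhom <= rhop ->
  rhom * r * psi 0 ^+ 2 <= 2 * Jfun b rhop rhom psi dpsi r.
Proof.
move=> rho; have /andP[+ _] := Jfun_bounds _ _ r rho; apply: le_trans.
rewrite -mulrA; apply: ler_wpM2l; first by case/andP: rho => /ltW.
have := trace_le psi_cont dpsi_cont (H2_rep_is_derive mb1 psiH2) psi_mb r 0.
by apply; rewrite oppr_lt0 b_gt0 ler01.
Qed.

Lemma Evis_coercive rhop rhom mup mum r : 0 < rhom <= rhop -> 0 < mup -> 0 < mum ->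
  coercivity_const b rhop mup mum r * Jfun b rhop rhom psi dpsi r
    <= Evis b mup mum psi dpsi ddpsi r.
Proof.
rewrite /coercivity_const => rho mup_gt0 mum_gt0; have /andP[rhom_gt0 rho_le] := rho.
have m_gt0 : 0 < Num.min mup mum by rewrite lt_min mup_gt0 mum_gt0.
have idpsi := within_continuous_integrable (within_continuousX 2 dpsi_cont).
have ipsi := within_continuous_integrable (within_continuousX 2 psi_cont).
have dpsi_Evis : 4 * r ^+ 2 * Num.min mup mum * \int[mu]_(x in `[- b, 1]) (dpsi x ^+ 2)
    <= 2 * Evis b mup mum psi dpsi ddpsi r.
  rewrite /Evis mulVKf ?pnatr_eq0 //.
  have /andP[+ _] := Rintegral_weight_bounds mI (measurable_pw _ _ _ mI) (hE_integrable r)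
    (fun x _ => hE_ge0 r x) (fun x _ => pw_itv mup mum x).
  apply: le_trans; rewrite [_ * Num.min _ _]mulrC -mulrA; apply: ler_wpM2l; first exact: ltW.
  rewrite -RintegralZl //; apply: le_Rintegral => //.
    exact: (eq_integrable _ _ _ _ (integrableZl _ _ idpsi)).
  by move=> x _; rewrite lerDl sqr_ge0.
have J_dpsi : 2 * Jfun b rhop rhom psi dpsi r
    <= rhop * (4 * r ^+ 2 * (b + 2) ^+ 2 + 1) * \int[mu]_(x in `[- b, 1]) (dpsi x ^+ 2).
  have /andP[_] := Jfun_bounds _ _ r rho; move/le_trans; apply; rewrite -mulrA.
  apply: ler_wpM2l; first exact: ltW (lt_le_trans rhom_gt0 rho_le).
  rewrite RintegralD //; last exact: (eq_integrable _ _ _ _ (integrableZl _ _ ipsi)).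
  rewrite RintegralZl // mulrDl mul1r lerD2r.
  have := poincare_le mb1 psi_cont dpsi_cont (H2_rep_is_derive mb1 psiH2) psi_mb.
  rewrite (_ : 1 - - b + 1 = b + 2); last by ring.
  by move/(ler_wpM2l (sqr_ge0 r)); lra.
have K_gt0 : 0 < 4 * r ^+ 2 * (b + 2) ^+ 2 + 1.
  by have := sqr_ge0 (r * (b + 2)); nra.
rewrite mulrAC ler_pdivrMr; last by rewrite mulr_gt0 // (lt_le_trans rhom_gt0 rho_le).
have rm_ge0 : 0 <= r ^+ 2 * Num.min mup mum by rewrite mulr_ge0 ?sqr_ge0 ?ltW.
have rK_ge0 : 0 <= rhop * (4 * r ^+ 2 * (b + 2) ^+ 2 + 1).
  by apply: mulr_ge0; apply: ltW => //; exact: lt_le_trans rhom_gt0 rho_le.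
have := ler_wpM2l rm_ge0 J_dpsi; have := ler_wpM2l rK_ge0 dpsi_Evis; lra.
Qed.

Lemma Epot_ge g rhop rhom sigp sigm r : 0 <= g -> 0 < rhom <= rhop ->
  0 <= sigp -> 0 <= sigm -> 0 <= r ->
  - (r * g * (rhop - rhom) / rhom) * Jfun b rhop rhom psi dpsi r
    <= Epot g rhop rhom sigp sigm psi r.
Proof.
move=> g_ge0 rho sigp_ge0 sigm_ge0 r_ge0; have /andP[rhom_gt0 rho_le] := rho.
have k_ge0 : 0 <= r * g * (rhop - rhom) / (2 * rhom).
  by rewrite divr_ge0 ?mulr_ge0 ?subr_ge0 // ltW // mulr_gt0.
have := ler_wpM2l k_ge0 (trace_Jfun _ _ r rho).
rewrite (_ : _ * (rhom * r * psi 0 ^+ 2) = 2^-1 * r ^+ 2 * (g * (rhop - rhom)) * psi 0 ^+ 2);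
  last by field; rewrite lt0r_neq0.
rewrite (_ : _ * (2 * _) = r * g * (rhop - rhom) / rhom * Jfun b rhop rhom psi dpsi r);
  last by field; rewrite lt0r_neq0.
have : 0 <= 2^-1 * r ^+ 2 * (sigp * r ^+ 2 + g * rhop) * psi 1 ^+ 2.
  apply: mulr_ge0; last exact: sqr_ge0.
  apply: mulr_ge0; first by rewrite mulr_ge0 ?invr_ge0 ?ler0n ?sqr_ge0.
  by rewrite addr_ge0 ?mulr_ge0 ?sqr_ge0 // ltW // (lt_le_trans rhom_gt0).
have : 0 <= 2^-1 * r ^+ 2 * (sigm * r ^+ 2) * psi 0 ^+ 2.
  apply: mulr_ge0; last exact: sqr_ge0.
  by rewrite mulr_ge0 ?mulr_ge0 ?invr_ge0 ?ler0n ?sqr_ge0.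
rewrite /Epot; lra.
Qed.

End admissible.
End energies.

Arguments Evis {R}.
Arguments Epot {R}.
Arguments coercivity_const {R}.
Arguments coercivity_const_gt0 {R}.
Arguments Efun_affine {R b psi dpsi ddpsi}.
Arguments Jfun_scale {R b psi dpsi ddpsi}.
Arguments trace_Jfun {R b psi dpsi ddpsi}.
Arguments Evis_coercive {R b psi dpsi ddpsi}.
Arguments Epot_ge {R b psi dpsi ddpsi}.

Section test_function.
Variables (R : realType) (b : R).

Definition test_psi (k x : R) := k * ((x + b) ^+ 2 * (1 - x)).
Definition test_dpsi (k x : R) := k * (2 * (x + b) * (1 - x) - (x + b) ^+ 2).
Definition test_ddpsi (k x : R) := k * (2 * (1 - x) - 4 * (x + b)).

Lemma test_in_X k : in_X b (test_psi k) (test_dpsi k) (test_ddpsi k).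
Proof.
have psi_der (x : R) : is_derive x 1 (test_psi k) (test_dpsi k x).
  by rewrite /test_psi /test_dpsi; apply: is_derive_eq; rewrite /GRing.scale /=; ring.
have dpsi_der (x : R) : is_derive x 1 (test_dpsi k) (test_ddpsi k x).
  by rewrite /test_dpsi /test_ddpsi; apply: is_derive_eq; rewrite /GRing.scale /=; ring.
have ddpsi_der (x : R) : is_derive x 1 (test_ddpsi k) (k * - 6).
  by rewrite /test_ddpsi; apply: is_derive_eq; rewrite /GRing.scale /=; ring.
have ddpsi_cont := is_derive_continuous ddpsi_der.
have dpsi_cont := is_derive_continuous dpsi_der.
split; last 2 first.
- by rewrite /test_psi addNr expr0n mul0r mulr0.
- by rewrite /test_dpsi addNr expr0n !mulr0 mul0r subr0 mulr0.
split.
- apply: subspace_continuous_measurable_fun; first exact: measurable_itv.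
  exact: continuous_subspaceT.
- have /integrableP[_] := @within_continuous_integrable _ (- b) 1 _
    (within_continuousX 2 (continuous_subspaceT ddpsi_cont)).
  apply: le_lt_trans; rewrite le_eqVlt; apply/orP; left; apply/eqP.
  by apply: eq_integral => x _ /=; rewrite ger0_norm // sqr_ge0.
- by move=> x /andP[bx _]; exact: primitive_is_derive bx ddpsi_cont dpsi_der.
- by move=> x /andP[bx _]; exact: primitive_is_derive bx dpsi_cont psi_der.
Qed.

End test_function.

Arguments test_in_X {R}.
Arguments test_psi {R}.
Arguments test_dpsi {R}.
Arguments test_ddpsi {R}.

Lemma below_crit_lt {R : realType} {g rhop rhom sigm r : R} :
  0 < g * (rhop - rhom) -> 0 <= sigm -> 0 < r ->
  below_crit g rhop rhom sigm r -> sigm * r ^+ 2 < g * (rhop - rhom).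
Proof.
move=> gd_gt0 sigm_ge0 r_gt0; rewrite /below_crit.
have [->|sigm_neq0] := eqVneq sigm 0; first by rewrite mul0r.
have sigm_gt0 : 0 < sigm by rewrite lt_neqAle eq_sym sigm_neq0.
move=> /= r_lt.
have : r ^+ 2 < g * (rhop - rhom) / sigm.
  rewrite -(sqr_sqrtr (divr_ge0 (ltW gd_gt0) (ltW sigm_gt0))) !expr2.
  by apply: ltr_pM => //; exact: ltW.
by rewrite ltr_pdivlMr // mulrC.
Qed.

Section admissible_family.
Variable R : realType.

Definition admissible (b rhop rhom r : R) (i : (R -> R) * (R -> R) * (R -> R)) : Prop :=
  in_X b i.1.1 i.1.2 i.2 /\ Jfun b rhop rhom i.1.1 i.1.2 r = 1.

Lemma alphaE (b g rhop rhom mup mum sigp sigm r s : R) : 0 < b ->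
  alpha b g rhop rhom mup mum sigp sigm r s =
  affine_inf (admissible b rhop rhom r) (fun i => Evis b mup mum i.1.1 i.1.2 i.2 r)
    (fun i => Epot g rhop rhom sigp sigm i.1.1 r) s.
Proof.
move=> b_gt0; rewrite /alpha /affine_inf; congr ereal_inf; apply/funext => e.
apply/propext; split.
- by move=> [p [dp [ddp [pX pJ ->]]]]; exists (p, dp, ddp) => //; rewrite Efun_affine.
- by move=> [[[p dp] ddp] [pX pJ] <-]; exists p, dp, ddp; rewrite Efun_affine.
Qed.

(* The normalised bump (x + b)^2 (1 - x) vanishes at the top boundary, so only
   the destabilising term at the interface survives in Epot. *)
Lemma exists_admissible_Epot_lt0 (b g rhop rhom sigp sigm r : R) :
  0 < b -> 0 < rhom <= rhop -> 0 < r -> sigm * r ^+ 2 < g * (rhop - rhom) ->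
  exists2 i, admissible b rhop rhom r i & Epot g rhop rhom sigp sigm i.1.1 r < 0.
Proof.
move=> b_gt0 rho r_gt0 crit; have /andP[rhom_gt0 _] := rho.
set J1 := Jfun b rhop rhom (test_psi b 1) (test_dpsi b 1) r.
have J1_gt0 : 0 < J1.
  have := trace_Jfun b_gt0 (test_in_X b 1) _ _ r rho.
  rewrite -/J1 {1}/test_psi add0r subr0 mulr1 mul1r.
  have : 0 < rhom * r * b ^+ 2 ^+ 2 by rewrite !mulr_gt0 // !exprn_gt0.
  lra.
set k := (Num.sqrt J1)^-1.
exists (test_psi b k, test_dpsi b k, test_ddpsi b k); first split.
- exact: test_in_X.
- have -> : test_psi b k = (fun x => k * test_psi b 1 x).
    by apply/funext => x; rewrite /test_psi mul1r.
  have -> : test_dpsi b k = (fun x => k * test_dpsi b 1 x).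
    by apply/funext => x; rewrite /test_dpsi mul1r.
  rewrite (Jfun_scale b_gt0 (test_in_X b 1)) -/J1 /k exprVn sqr_sqrtr ?ltW //.
  by rewrite mulVf // gt_eqF.
- rewrite /Epot /= /test_psi subrr !mulr0 expr0n /= mulr0 !add0r.
  rewrite pmulr_llt0 ?exprn_gt0 ?mulr_gt0 ?invr_gt0 ?sqrtr_gt0 ?exprn_gt0 //.
  by rewrite pmulr_rlt0 ?mulr_gt0 ?invr_gt0 ?exprn_gt0 // subr_lt0.
Qed.

End admissible_family.

Arguments admissible {R}.
Arguments exists_admissible_Epot_lt0 {R b g rhop rhom} sigp {sigm r}.

Theorem lemma2p1 (R : realType) (b g rhop rhom mup mum sigp sigm r : R)
  (hb : 0 < b) (hg : 0 < g) (hrho : 0 < rhom < rhop)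
  (hmu : 0 < mup /\ 0 < mum)
  (hsig : (sigp = 0 /\ sigm = 0) \/ (0 < sigp /\ 0 < sigm))
  (hr : 0 < r) (hrc : below_crit g rhop rhom sigm r) :
  let al := alpha b g rhop rhom mup mum sigp sigm r in
  exists a : R -> R,
    (forall s, 0 < s -> al s = (a s)%:E) /\
    (forall c d, 0 < c -> c <= d -> exists L : R,
       forall x y, c <= x <= d -> c <= y <= d -> `|a x - a y| <= L * `|x - y|) /\
    (forall s, 0 < s -> {for s, continuous a}) /\
    (forall s t, 0 < s -> s < t -> a s < a t) /\
    (exists C0 C1 C2 : R, [/\ 0 < C0, 0 < C1, 0 < C2 &
       forall s, 0 < s ->
         a s <= - C0 + s * C1 /\
         - (2 * g * (rhop - rhom) / rhom) * r + s * C2 <= a s]).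
Proof.
move=> al; have /andP[rhom_gt0 rho_lt] := hrho.
have rho : 0 < rhom <= rhop by rewrite rhom_gt0 ltW.
have [mup_gt0 mum_gt0] := hmu.
have [sigp_ge0 sigm_ge0] : 0 <= sigp /\ 0 <= sigm.
  by case: hsig => -[h1 h2]; [rewrite h1 h2|split; apply: ltW].
have gd_gt0 : 0 < g * (rhop - rhom) by rewrite mulr_gt0 // subr_gt0.
set P := admissible b rhop rhom r.
set A := fun i : (R -> R) * (R -> R) * (R -> R) => Evis b mup mum i.1.1 i.1.2 i.2 r.
set B := fun i : (R -> R) * (R -> R) * (R -> R) => Epot g rhop rhom sigp sigm i.1.1 r.
set C2 := coercivity_const b rhop mup mum r.
set K := r * g * (rhop - rhom) / rhom.
have C2_gt0 : 0 < C2.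
  by apply: coercivity_const_gt0 => //; exact: lt_trans rhom_gt0 rho_lt.
have A_ge i : P i -> C2 <= A i.
  by case=> iX iJ; rewrite -[C2]mulr1 -iJ; exact: Evis_coercive.
have B_ge i : P i -> - K <= B i.
  case=> iX iJ; rewrite -[- K]mulr1 -iJ.
  exact: Epot_ge iX _ _ _ _ _ _ (ltW hg) rho sigp_ge0 sigm_ge0 (ltW hr).
have [i0 Pi0 Bi0] := exists_admissible_Epot_lt0 sigp hb rho hr
  (below_crit_lt gd_gt0 sigm_ge0 hr hrc).
exists (affine_infr P A B); split; [|split; [|split; [|split]]].
- by move=> s s_gt0; rewrite /al alphaE // (affine_infE Pi0 A_ge B_ge).
- by move=> c d c_gt0 _; exact: affine_infr_lipschitz C2_gt0 Pi0 A_ge B_ge c d c_gt0.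
- by move=> s; exact: affine_infr_continuous C2_gt0 Pi0 A_ge B_ge s.
- by move=> s t; exact: affine_infr_lt C2_gt0 Pi0 A_ge B_ge s t.
- exists (- B i0), (A i0), C2; split; rewrite ?oppr_gt0 //.
    exact: lt_le_trans C2_gt0 (A_ge _ Pi0).
  move=> s s_gt0; split.
    by rewrite opprK addrC; have := affine_infr_le Pi0 A_ge B_ge s_gt0 Pi0.
  apply: le_trans (affine_infr_ge Pi0 A_ge B_ge s_gt0); rewrite lerD2r.
  have : 0 <= K by rewrite divr_ge0 ?(ltW rhom_gt0) // -mulrA mulr_ge0 ?ltW.
  have : 2 * g * (rhop - rhom) / rhom * r = 2 * K by rewrite /K; field; exact: lt0r_neq0.
  lra.
Qed.
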